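(* Let $(\mathfrak g,r)$ be a triangular Lie bialgebra such that $r:\mathfrak g^*\to\mathfrak g$ is invertible. For $\lambda_1,\lambda_2,\lambda_3,\lambda_4\in\mathbb R$ define $N=N_{\lambda_1,\lambda_2,\lambda_3,\lambda_4}:\mathcal D(\mathfrak g)\to\mathcal D(\mathfrak g)$ by $N(x,a^* )=(\lambda_1r(a^* )+\lambda_2x,\ \lambda_3r^{-1}(x)+\lambda_4a^* )$. Then $N$ is a Nijenhuis tensor on $\mathcal D(\mathfrak g)$: $[N(X),N(Y)]+N^2([X,Y])=N([N(X),Y]+[X,N(Y)])$ for all $X,Y\in\mathcal D(\mathfrak g)$.
   Context: $\mathfrak g$ a finite-dimensional real Lie algebra; $r\in\mathfrak g\otimes\mathfrak g$ identified with $r:\mathfrak g^*\to\mathfrak g$ via $\langle r(a^* ),b^*\rangle=\langle a^*\otimes b^*,r\rangle$. $(\mathfrak g,r)$ triangular means $r$ is skew-symmetric and satisfies the CYBE $[r_{12},r_{13}]+[r_{12},r_{23}]+[r_{13},r_{23}]=0$ (for $r=\sum a_i\otimes b_i$: $[r_{12},r_{13}]=\sum[a_i,a_j]\otimes b_i\otimes b_j$, $[r_{12},r_{23}]=\sum a_i\otimes[b_i,a_j]\otimes b_j$, $[r_{13},r_{23}]=\sum a_i\otimes a_j\otimes[b_i,b_j]$). Coadjoint action $\langle\mathrm{ad}^*(x)a^*,y\rangle=-\langle a^*,[x,y]\rangle$. Put $[a^*,b^*]_\delta=\mathrm{ad}^*(r(a^* ))b^*-\mathrm{ad}^*(r(b^*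 ))a^*$ on $\mathfrak g^*$ and, for $a^*\in\mathfrak g^*,x\in\mathfrak g$, $\langle\mathrm{ad}^*(a^* )x,b^*\rangle=-\langle x,[a^*,b^*]_\delta\rangle$. The Drinfeld double $\mathcal D(\mathfrak g)=\mathfrak g\oplus\mathfrak g^*$ has bracket $[(x,a^* ),(y,b^* )]=([x,y]+\mathrm{ad}^*(a^* )y-\mathrm{ad}^*(b^* )x,\ [a^*,b^*]_\delta+\mathrm{ad}^*(x)b^*-\mathrm{ad}^*(y)a^* )$. *)

(* A finite-dimensional Lie algebra g of dimension n over a
   real field R is represented in a basis e_0..e_(n-1): elements of g are row
   vectors 'rV[R]_n, elements of g^* are row vectors 'rV[R]_n in the dual basis,
   and the bracket is given by structure constants c i j k ([e_i,e_j] = sum_k c i j k e_k). *)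
From HB Require Import structures.
From mathcomp Require Import all_boot all_order all_algebra.
Set Implicit Arguments. Unset Strict Implicit. Unset Printing Implicit Defensive.
Import GRing.Theory Num.Theory.
Local Open Scope ring_scope.

Section Defs.
Variables (R : realFieldType) (n : nat).
Variable (c : 'I_n -> 'I_n -> 'I_n -> R).
Variable (r : 'M[R]_n).

Definition pair (a x : 'rV[R]_n) : R := \sum_(i < n) a 0 i * x 0 i.

Definition bvec (m : 'I_n) : 'rV[R]_n := delta_mx 0 m.

Definition lie (x y : 'rV[R]_n) : 'rV[R]_n :=
  \row_k \sum_(i < n) \sum_(j < n) x 0 i * y 0 j * c i j k.

Definition is_lie_algebra : Prop :=
  (forall x y, lie x y = - lie y x) /\
  (forall x y z, lie x (lie y z) + lie y (lie z x) + lie z (lie x y) = 0).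

(* r = sum_(i,j) r i j e_i (x) e_j ; as a map g^dual -> g : <r(a), b> = <a (x) b, r> *)
Definition rmap (a : 'rV[R]_n) : 'rV[R]_n := a *m r.

Definition skew : Prop := trmx r = - r.

(* coefficient of e_p (x) e_q (x) e_s in [r12,r13]+[r12,r23]+[r13,r23] *)
Definition CYBE_coef (p q s : 'I_n) : R :=
    \sum_(i < n) \sum_(k < n) r i q * r k s * c i k p
  + \sum_(j < n) \sum_(k < n) r p j * r k s * c j k q
  + \sum_(j < n) \sum_(l < n) r p j * r q l * c j l s.

Definition CYBE : Prop := forall p q s, CYBE_coef p q s = 0.

Definition triangular : Prop := is_lie_algebra /\ skew /\ CYBE.

Definition coad (x a : 'rV[R]_n) : 'rV[R]_n :=
  \row_m (- pair a (lie x (bvec m))).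

Definition brd (a b : 'rV[R]_n) : 'rV[R]_n :=
  coad (rmap a) b - coad (rmap b) a.

Definition coadd (a x : 'rV[R]_n) : 'rV[R]_n :=
  \row_m (- pair (brd a (bvec m)) x).

Definition dbl := ('rV[R]_n * 'rV[R]_n)%type.

Definition dbr (X Y : dbl) : dbl :=
  (lie X.1 Y.1 + coadd X.2 Y.1 - coadd Y.2 X.1,
   brd X.2 Y.2 + coad X.1 Y.2 - coad Y.1 X.2).

Definition Nmap (l1 l2 l3 l4 : R) (X : dbl) : dbl :=
  (l1 *: rmap X.2 + l2 *: X.1, l3 *: (X.1 *m invmx r) + l4 *: X.2).

End Defs.

From Pilot Require Import Defs.
From HB Require Import structures.
From mathcomp Require Import all_boot all_order all_algebra ring.
Set Implicit Arguments. Unset Strict Implicit. Unset Printing Implicit Defensive.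
Import GRing.Theory Num.Theory.
Local Open Scope ring_scope.

(* For skew-symmetric r the CYBE says exactly that r is a Lie algebra
   morphism (g^*, [,]_delta) -> g.  When r is invertible, this rewrites every
   component of the double bracket through the coadjoint action ad^* of g:
       [X, Y] = rho(pi X) Y - rho(pi Y) X,
   where pi(x, a) = x + r(a) and rho(z)(y, b) = (r ad^*_z r^{-1} y, ad^*_z b).
   Each rho(z) acts on both components "through r", hence commutes with N,
   and in any abelian group an additive N commuting with every rho(z) is
   Nijenhuis for a bracket of this shape. *)

Section NijenhuisCriterion.
Variables (V : zmodType) (N : V -> V) (br L : V -> V -> V).
Hypotheses (N_add : {morph N : u v / u + v}) (N_opp : {morph N : u / - u}).
Hypotheses (br_split : forall X Y, br X Y = L X Y - L Y X)
           (L_comm : forall X Y, L X (N Y) = N (L X Y)).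

Lemma nijenhuis_of_split X Y :
  br (N X) (N Y) + N (N (br X Y)) = N (br (N X) Y + br X (N Y)).
Proof.
rewrite !br_split !L_comm !(N_add, N_opp).
by rewrite addrACA [- _ + _]addrC addrACA.
Qed.

End NijenhuisCriterion.

Section StructureConstants.
Variables (R : realFieldType) (n : nat) (c : 'I_n -> 'I_n -> 'I_n -> R).

Definition adm (x : 'rV[R]_n) : 'M[R]_n :=
  \matrix_(j, k) \sum_(i < n) x 0 i * c i j k.

Lemma lieE x y : lie c x y = y *m adm x.
Proof.
apply/rowP => k; rewrite !mxE exchange_big; apply: eq_bigr => j _.
rewrite mxE mulr_sumr; apply: eq_bigr => i _.
by rewrite mulrA (mulrC (y 0 j)).
Qed.

Lemma coadE x a : coad c x a = - (a *m (adm x)^T).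
Proof.
apply/rowP => m; rewrite !mxE /pair; congr (- _); apply: eq_bigr => k _.
by rewrite lieE /bvec -rowE !mxE.
Qed.

Lemma admD x y : adm (x + y) = adm x + adm y.
Proof.
apply/matrixP => j k; rewrite !mxE -big_split; apply: eq_bigr => i _.
by rewrite mxE mulrDl.
Qed.

Lemma coadDl x y a : coad c (x + y) a = coad c x a + coad c y a.
Proof. by rewrite !coadE admD linearD /= mulmxDr opprD. Qed.

Lemma coadDr x a b : coad c x (a + b) = coad c x a + coad c x b.
Proof. by rewrite !coadE mulmxDl opprD. Qed.

Lemma coadZr x k a : coad c x (k *: a) = k *: coad c x a.
Proof. by rewrite !coadE -scalemxAl scalerN. Qed.

Lemma lie_bvec u v k : lie c (bvec R u) (bvec R v) 0 k = c u v k.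
Proof.
rewrite lieE /bvec -rowE !mxE (bigD1 u) //= mxE !eqxx mul1r big1 ?addr0 //.
by move=> i /negbTE ne; rewrite mxE ne andbF mul0r.
Qed.

Lemma structure_const_antisym :
  (forall x y, lie c x y = - lie c y x) -> forall i j k, c i j k = - c j i k.
Proof. by move=> lieN i j k; rewrite -!lie_bvec lieN mxE. Qed.

End StructureConstants.

Section CYBEMorphism.
Variables (R : realFieldType) (n : nat) (c : 'I_n -> 'I_n -> 'I_n -> R).
Variable r : 'M[R]_n.

Definition bilin (T : 'I_n -> 'I_n -> 'I_n -> R) (a b : 'rV[R]_n) (q : 'I_n) : R :=
  \sum_(p < n) \sum_(s < n) a 0 p * b 0 s * T p s q.

Lemma bilinC T a b q : bilin T b a q = bilin (fun p s => T s p) a b q.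
Proof.
rewrite /bilin exchange_big; apply: eq_bigr => p _; apply: eq_bigr => s _.
by rewrite (mulrC (b 0 s)).
Qed.

Lemma bilinB T1 T2 a b q :
  bilin (fun p s q => T1 p s q - T2 p s q) a b q = bilin T1 a b q - bilin T2 a b q.
Proof.
rewrite /bilin -sumrB; apply: eq_bigr => p _; rewrite -sumrB.
by apply: eq_bigr => s _; rewrite mulrBr.
Qed.

(* Coefficient tensors of (a, b) |-> r ad^*_{r a} b and of
   (a, b) |-> [r a, r b]. *)
Definition coad_tensor (p s q : 'I_n) : R :=
  \sum_(i < n) \sum_(m < n) r p i * c i m s * r m q.

Definition lie_tensor (p s q : 'I_n) : R :=
  \sum_(i < n) \sum_(j < n) r p i * r s j * c i j q.

Lemma sum4_swap_outer (F : 'I_n -> 'I_n -> 'I_n -> 'I_n -> R) :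
  \sum_(i < n) \sum_(j < n) \sum_(k < n) \sum_(l < n) F i j k l =
  \sum_(l < n) \sum_(j < n) \sum_(k < n) \sum_(i < n) F i j k l.
Proof.
under eq_bigr => i _ do under eq_bigr => j _ do rewrite exchange_big.
under eq_bigr => i _ do rewrite exchange_big.
rewrite exchange_big.
under eq_bigr => l _ do rewrite exchange_big.
by under eq_bigr => l _ do under eq_bigr => j _ do rewrite exchange_big.
Qed.

Lemma sum4_swap_pairs (F : 'I_n -> 'I_n -> 'I_n -> 'I_n -> R) :
  \sum_(i < n) \sum_(j < n) \sum_(k < n) \sum_(l < n) F i j k l =
  \sum_(k < n) \sum_(l < n) \sum_(i < n) \sum_(j < n) F i j k l.
Proof.
under eq_bigr => i _ do rewrite exchange_big.
rewrite exchange_big.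
under eq_bigr => k _ do under eq_bigr => i _ do rewrite exchange_big.
by under eq_bigr => k _ do rewrite exchange_big.
Qed.

Lemma coad_r_coef x y q :
  (coad c (x *m r) y *m r) 0 q = - bilin coad_tensor x y q.
Proof.
rewrite coadE mulNmx !mxE; congr (- _).
under eq_bigr => m _ do rewrite mxE big_distrl.
under eq_bigr => m _ do under eq_bigr => s _ do rewrite !mxE big_distrr big_distrl.
under eq_bigr => m _ do under eq_bigr => s _ do under eq_bigr => i _ do
  rewrite mxE big_distrl big_distrr big_distrl.
rewrite sum4_swap_outer; apply: eq_bigr => p _; apply: eq_bigr => s _.
rewrite big_distrr; apply: eq_bigr => i _; rewrite big_distrr; apply: eq_bigr => m _.
by rewrite /= !mulrA (mulrC (y 0 s)).
Qed.

Lemma lie_r_coef a b q :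
  lie c (a *m r) (b *m r) 0 q = bilin lie_tensor a b q.
Proof.
rewrite mxE.
under eq_bigr => i _ do under eq_bigr => j _ do rewrite !mxE !big_distrl.
under eq_bigr => i _ do under eq_bigr => j _ do under eq_bigr => p _ do
  rewrite big_distrr big_distrl.
rewrite sum4_swap_pairs; apply: eq_bigr => p _; apply: eq_bigr => s _.
rewrite big_distrr; apply: eq_bigr => i _; rewrite big_distrr; apply: eq_bigr => j _.
by rewrite /= !mulrA [a 0 p * r p i * b 0 s]mulrAC.
Qed.

Lemma skew_entry : Defs.skew r -> forall i j, r i j = - r j i.
Proof. by move=> rT i j; have := congr1 (fun M : 'M_n => M j i) rT; rewrite !mxE. Qed.

(* For skew r and antisymmetric structure constants, the three terms of the
   CYBE coefficient are [coad_tensor] with its first two indices in both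
   orders and [lie_tensor], up to sign; the CYBE thus expresses the latter
   through the former. *)
Lemma CYBE_tensor :
  (forall i j k, c i j k = - c j i k) -> Defs.skew r -> CYBE c r ->
  forall p s q, lie_tensor p s q = coad_tensor s p q - coad_tensor p s q.
Proof.
move=> cN rT cybe p s q; have := cybe p q s; rewrite /CYBE_coef.
have -> : \sum_(i < n) \sum_(k < n) r i q * r k s * c i k p = coad_tensor s p q.
  rewrite /coad_tensor exchange_big; apply: eq_bigr => k _; apply: eq_bigr => i _.
  by rewrite (skew_entry rT k s) cN !mulrN !mulNr opprK -mulrA mulrC.
have -> : \sum_(j < n) \sum_(k < n) r p j * r k s * c j k q = - lie_tensor p s q.
  rewrite /lie_tensor -sumrN; apply: eq_bigr => j _; rewrite -sumrN.
  by apply: eq_bigr => k _; rewrite (skew_entry rT k s) !mulrN !mulNr.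
have -> : \sum_(j < n) \sum_(l < n) r p j * r q l * c j l s = - coad_tensor p s q.
  rewrite /coad_tensor -sumrN; apply: eq_bigr => j _; rewrite -sumrN.
  by apply: eq_bigr => l _; rewrite (skew_entry rT q l) !mulrN !mulNr mulrAC.
by move=> h; apply/eqP; rewrite eq_sym -subr_eq0 -h; apply/eqP; ring.
Qed.

Lemma rmap_bracket_hom :
  (forall i j k, c i j k = - c j i k) -> Defs.skew r -> CYBE c r ->
  forall a b, brd c r a b *m r = lie c (a *m r) (b *m r).
Proof.
move=> cN rT cybe a b; apply/rowP => q.
have entryB (M N : 'rV[R]_n) : (M - N) 0 q = M 0 q - N 0 q by rewrite !mxE.
rewrite /brd /rmap mulmxBl entryB !coad_r_coef lie_r_coef opprK addrC bilinC -bilinB.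
by apply: eq_bigr => p _; apply: eq_bigr => s _; rewrite CYBE_tensor.
Qed.

End CYBEMorphism.

Section DoubleAction.
Variables (R : realFieldType) (n : nat) (c : 'I_n -> 'I_n -> 'I_n -> R).
Variable r : 'M[R]_n.

Definition anchor (X : dbl R n) : 'rV[R]_n := X.1 + X.2 *m r.

Definition act (z : 'rV[R]_n) (Y : dbl R n) : dbl R n :=
  (coad c z (Y.1 *m invmx r) *m r, coad c z Y.2).

Lemma NmapD l1 l2 l3 l4 : {morph Nmap r l1 l2 l3 l4 : U V / U + V}.
Proof.
move=> [u a] [v b]; rewrite /Nmap /rmap /=.
by congr (_, _); rewrite mulmxDl !scalerDr addrACA.
Qed.

Lemma NmapN l1 l2 l3 l4 : {morph Nmap r l1 l2 l3 l4 : U / - U}.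
Proof.
by move=> [u a]; rewrite /Nmap /rmap /=; congr (_, _); rewrite mulNmx !scalerN opprD.
Qed.

(* N is built from r, r^{-1} and scalars, so it commutes with every rho(z). *)
Lemma act_Nmap (r_unit : r \in unitmx) l1 l2 l3 l4 z Y :
  act z (Nmap r l1 l2 l3 l4 Y) = Nmap r l1 l2 l3 l4 (act z Y).
Proof.
case: Y => y b; rewrite /act /Nmap /rmap /=; congr (_, _).
  by rewrite mulmxDl -!scalemxAl (mulmxK r_unit) coadDr !coadZr mulmxDl -!scalemxAl.
by rewrite coadDr !coadZr (mulmxK r_unit).
Qed.

End DoubleAction.

Section InvertibleTriangular.
Variables (R : realFieldType) (n : nat) (c : 'I_n -> 'I_n -> 'I_n -> R).
Variable r : 'M[R]_n.
Hypotheses (c_antisym : forall i j k, c i j k = - c j i k)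
           (r_skew : Defs.skew r) (r_cybe : CYBE c r) (r_unit : r \in unitmx).

Lemma invmx_skew : (invmx r)^T = - invmx r.
Proof.
have r_invT : r *m (invmx r)^T = - 1%:M.
  apply: oppr_inj; rewrite opprK -mulNmx -r_skew -trmx_mul.
  by rewrite mulVmx // trmx1.
by rewrite -[(invmx r)^T](mulKmx r_unit) r_invT mulmxN mulmx1.
Qed.

(* The bracket of g pulled back along r: [x, y] = r [r^{-1} x, r^{-1} y]_delta. *)
Lemma lie_via_coad x y :
  lie c x y = (coad c x (y *m invmx r) - coad c y (x *m invmx r)) *m r.
Proof.
by have := rmap_bracket_hom c_antisym r_skew r_cybe (x *m invmx r) (y *m invmx r);
  rewrite /brd /rmap !mulmxKV.
Qed.

Lemma coadd_via_coad a y :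
  coadd c r a y = coad c (a *m r) (y *m invmx r) *m r.
Proof.
apply/rowP => m; set P := r *m adm c (a *m r) *m invmx r.
have brd_bvec : brd c r a (bvec R m) = bvec R m *m P.
  by rewrite -[LHS](mulmxK r_unit) rmap_bracket_hom // lieE !mulmxA.
have coad_tr : (coad c (a *m r) (y *m invmx r) *m r)^T = - (P *m y^T).
  rewrite coadE mulNmx raddfN /= !trmx_mul trmxK invmx_skew r_skew.
  by rewrite !mulNmx !mulmxN !opprK !mulmxA.
have entryT (w : 'rV[R]_n) : w 0 m = w^T m 0 by rewrite mxE.
rewrite [LHS]mxE brd_bvec [RHS]entryT coad_tr /bvec -rowE !mxE /pair.
by congr (- _); apply: eq_bigr => i _; rewrite !mxE.
Qed.

Lemma dbr_split X Y :
  dbr c r X Y = act c r (anchor r X) Y - act c r (anchor r Y) X.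
Proof.
case: X Y => [x a] [y b].
rewrite /dbr /act /anchor -[RHS]/(_ - _, _ - _) /=; congr (_, _).
  rewrite lie_via_coad !coadd_via_coad !coadDl !mulmxDl ?mulmxBl.
  by rewrite mulNmx opprD addrACA addrA.
by rewrite /brd /rmap !coadDl opprD [RHS]addrACA [RHS]addrC addrA.
Qed.

End InvertibleTriangular.

Theorem lemma4p8 (R : realFieldType) (n : nat)
    (c : 'I_n -> 'I_n -> 'I_n -> R) (r : 'M[R]_n)
    (Htri : triangular c r) (Hinv : r \in unitmx)
    (l1 l2 l3 l4 : R) (X Y : dbl R n) :
  let N := Nmap r l1 l2 l3 l4 in
  let br := dbr c r in
  br (N X) (N Y) + N (N (br X Y)) = N (br (N X) Y + br X (N Y)).
Proof.
case: Htri => [[lieN _] [r_skew r_cybe]] N br.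
have c_antisym := structure_const_antisym lieN.
apply: (@nijenhuis_of_split _ N br (fun X => act c r (anchor r X))).
- exact: NmapD.
- exact: NmapN.
- exact: (dbr_split c_antisym r_skew r_cybe Hinv).
- by move=> U V; rewrite /N (act_Nmap c Hinv).
Qed.
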